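(* Consider a population of $N$ units, $M$ of which have a certain attribute, and a positive integer $r\le M$. Units are sampled without replacement until $r$ units with the attribute are observed; let $\boldsymbol n$ be the number of units checked, so that $\Pr\{\boldsymbol n=n\mid M\}=\binom{n-1}{r-1}\binom{N-n}{M-r}/\binom NM$ for $r\le n\le N$. Let $I_{\boldsymbol n}$ be the support of $\boldsymbol n$, and let $\widehat M=\widehat M(n)$ be a function of $n\in I_{\boldsymbol n}$ taking values in $\{m\in\mathbb{Z}:r\le m\le N\}$. Then $$\Pr\{\boldsymbol n\le n\mid M\}\le\frac{\binom N{\widehat M}\binom{N-n}{M-r}}{\binom NM\binom{N-n}{\widehat M-r}}=\frac{\binom Mr\binom{N-M}{n-r}}{\binom{\widehat M}r\binom{N-\widehat M}{n-r}}\quad\text{for } n\in I_{\boldsymbol n}\text{ such that }\widehat M(n)\ge M,$$ $$\Pr\{\boldsymbol n\ge n\mid M\}\le\frac{\binom N{\widehat M}\binom{N-n}{M-r}}{\binom NM\binom{N-n}{\widehat M-r}}=\frac{\binom Mr\binom{N-M}{n-r}}{\binom{\widehat M}r\binom{N-\widehat M}{n-r}}\quad\text{for } n\in I_{\boldsymbol n}\text{ such that }\widehat M(n)\le M.$$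
   Context: $\Pr\{\cdot\mid M\}$ denotes probability when the population contains $M$ units with the attribute. *)

From mathcomp Require Import all_boot all_order all_algebra.
Set Implicit Arguments. Unset Strict Implicit. Unset Printing Implicit Defensive.
Import Order.TTheory GRing.Theory Num.Theory.
Local Open Scope ring_scope.

Section InverseHypergeometric.
Variable R : realFieldType.

Definition ihg_pmf (N M r n : nat) : R :=
  ('C(n.-1, r.-1) * 'C(N - n, M - r))%:R / ('C(N, M))%:R.

Definition ihg_cdf_le (N M r n : nat) : R :=
  \sum_(r <= j < n.+1) ihg_pmf N M r j.

Definition ihg_cdf_ge (N M r n : nat) : R :=
  \sum_(n <= j < N.+1) ihg_pmf N M r j.

Definition ihg_support (N M r n : nat) : bool :=
  [&& (r <= n)%N, (n <= N)%N & 0 < ihg_pmf N M r n].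

Definition ihg_bound1 (N M r n Mh : nat) : R :=
  ('C(N, Mh) * 'C(N - n, M - r))%:R / ('C(N, M) * 'C(N - n, Mh - r))%:R.

Definition ihg_bound2 (N M r n Mh : nat) : R :=
  ('C(M, r) * 'C(N - M, n - r))%:R / ('C(Mh, r) * 'C(N - Mh, n - r))%:R.

End InverseHypergeometric.

From mathcomp Require Import all_boot all_order all_algebra zify ring.
Set Implicit Arguments. Unset Strict Implicit. Unset Printing Implicit Defensive.
Import Order.TTheory GRing.Theory Num.Theory.

(* The weights C(n-1, r-1) C(N-n, M-r) have a monotone likelihood ratio in M:
   for M <= K the ratio Pr{n = j | M} / Pr{n = j | K} decreases in j.  Hence
   for j <= n we get Pr{n = j | M} <= (Pr{n = n | M} / Pr{n = n | K}) Pr{n = j | K},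
   and summing over j <= n while using that Pr{. | K} has total mass 1 bounds
   Pr{n <= n | M} by Pr{n = n | M} / Pr{n = n | K}, which is the stated bound
   for K = \hat M.  The case \hat M <= M is symmetric.  The second form of the
   bound comes from double counting the pairs (K-set, n-set) meeting in r points. *)

Lemma leq_bin_crossS m m' k : m <= m' ->
  'C(m, k.+1) * 'C(m', k) <= 'C(m, k) * 'C(m', k.+1).
Proof.
move=> le_mm'; rewrite -(leq_pmul2l (ltn0Sn k)).
rewrite mulnA mul_bin_left mulnCA mul_bin_left -mulnA mulnCA.
by rewrite leq_mul2l leq_mul2r leq_sub2r ?orbT.
Qed.

Lemma leq_bin_cross m m' a b : m <= m' -> a <= b ->
  'C(m', a) * 'C(m, b) <= 'C(m, a) * 'C(m', b).
Proof.
move=> le_mm' /subnKC <-; elim: (b - a) => [|d IH]; first by rewrite addn0 mulnC.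
rewrite addnS; have step := leq_bin_crossS (a + d) le_mm'.
have [c0|c_gt0] := posnP 'C(m', a + d).
  have lt_m'_ad : m' < a + d by rewrite ltnNge -bin_gt0 c0.
  by rewrite (@bin_small m) ?muln0 //; lia.
rewrite -(leq_pmul2r c_gt0).
apply: (@leq_trans ('C(m', a) * ('C(m, a + d) * 'C(m', (a + d).+1)))).
  by rewrite -mulnA leq_mul2l step orbT.
by rewrite mulnA [_ * 'C(m', (a + d).+1) * _]mulnAC leq_mul2r IH orbT.
Qed.

Lemma sum_bin_mul_rev n a b :
  \sum_(i < n.+1) 'C(i, a) * 'C(n - i, b) = 'C(n.+1, (a + b).+1).
Proof.
elim: n b => [|n IH] b.
  by rewrite big_ord1 /= bin0n; case: a => [|a]; case: b => [|b]; rewrite ?muln0.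
rewrite big_ord_recr /= subnn; case: b => [|b].
  have := IH 0; rewrite !addn0 => IH0.
  rewrite bin0 muln1 [in RHS]binS -IH0; congr (_ + _).
  by apply: eq_bigr => i _; rewrite (bin0 (n.+1 - i)) (bin0 (n - i)).
rewrite bin0n muln0 addn0.
rewrite (eq_bigr (fun i : 'I_n.+1 => 'C(i, a) * 'C(n - i, b.+1) + 'C(i, a) * 'C(n - i, b)));
  last by move=> i _; rewrite subSn ?binS ?mulnDr // -ltnS.
by rewrite big_split /= !IH addnS [in RHS]binS.
Qed.

Lemma sum_ihg_weights N K r : 0 < r -> r <= K -> K <= N ->
  \sum_(r <= j < N.+1) 'C(j.-1, r.-1) * 'C(N - j, K - r) = 'C(N, K).
Proof.
move=> r_gt0 le_rK le_KN.
have vanish : \sum_(1 <= j < r) 'C(j.-1, r.-1) * 'C(N - j, K - r) = 0.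
  by rewrite big_nat big1 // => j /andP[j_gt0 lt_jr]; rewrite bin_small ?mul0n //; lia.
have -> : \sum_(r <= j < N.+1) 'C(j.-1, r.-1) * 'C(N - j, K - r) =
          \sum_(1 <= j < N.+1) 'C(j.-1, r.-1) * 'C(N - j, K - r).
  by rewrite [RHS](@big_cat_nat _ _ _ r) ?vanish ?add0n //; lia.
case: N le_KN {vanish} => [|N] le_KN; first by lia.
rewrite big_add1 /= big_mkord.
rewrite (eq_bigr (fun i : 'I_N.+1 => 'C(i, r.-1) * 'C(N - i, K - r))) //.
by rewrite sum_bin_mul_rev; congr 'C(_, _); lia.
Qed.

Lemma mul_bin_sub_sym N K n r : r <= K <= N -> r <= n <= N ->
  'C(N, K) * 'C(K, r) * 'C(N - K, n - r) = 'C(N, n) * 'C(n, r) * 'C(N - n, K - r).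
Proof.
move=> /andP[le_rK le_KN] /andP[le_rn le_nN].
have [le_Kr_Nn|lt_Nn_Kr] := leqP (K - r) (N - n); last first.
  by rewrite (@bin_small (N - n)) 1?(@bin_small (N - K)) ?muln0 //; lia.
have le_nr_NK : n - r <= N - K by lia.
have e : N - K - (n - r) = N - n - (K - r) by lia.
pose F := r`! * (K - r)`! * (n - r)`! * (N - n - (K - r))`!.
have F_gt0 : 0 < F by rewrite !muln_gt0 !fact_gt0.
apply/eqP; rewrite -(eqn_pmul2r F_gt0); apply/eqP; transitivity N`!.
  rewrite -(bin_fact le_KN) -(bin_fact le_rK) -(bin_fact le_nr_NK) /F -e; ring.
by rewrite -(bin_fact le_nN) -(bin_fact le_rn) -(bin_fact le_Kr_Nn) /F; ring.
Qed.

Local Open Scope ring_scope.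

Section InverseHypergeometric.
Variables (R : realFieldType) (N r : nat).
Hypothesis r_gt0 : (0 < r)%N.

Let pmf := ihg_pmf R N.

Lemma ihg_pmf_gt0 K n : (r <= n)%N -> (K <= N)%N -> (0 < pmf K r n) = (K - r <= N - n)%N.
Proof.
move=> le_rn le_KN; rewrite /pmf /ihg_pmf natrM pmulr_lgt0 ?invr_gt0 ?ltr0n ?bin_gt0 //.
by rewrite pmulr_rgt0 ?ltr0n ?bin_gt0 //; lia.
Qed.

Lemma ihg_pmf_ge0 K j : 0 <= pmf K r j.
Proof. by rewrite divr_ge0 ?ler0n. Qed.

Lemma sum_ihg_pmf K : (r <= K <= N)%N -> \sum_(r <= j < N.+1) pmf K r j = 1.
Proof.
move=> /andP[le_rK le_KN].
rewrite -mulr_suml -natr_sum sum_ihg_weights // divff //.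
by rewrite pnatr_eq0 -lt0n bin_gt0.
Qed.

Lemma sum_ihg_pmf_le1 K lo hi : (r <= K <= N)%N -> (r <= lo)%N -> (hi <= N.+1)%N ->
  \sum_(lo <= j < hi) pmf K r j <= 1.
Proof.
move=> le_rKN le_rlo le_hiN; rewrite -(sum_ihg_pmf le_rKN).
have [le_hilo|lt_lohi] := leqP hi lo; first by rewrite big_geq ?sumr_ge0 // => j; rewrite ihg_pmf_ge0.
have le_lohi := ltnW lt_lohi; have le_loN := leq_trans le_lohi le_hiN.
rewrite (@big_cat_nat _ _ _ lo r N.+1) ?le_rlo ?le_loN //.
rewrite (@big_cat_nat _ _ _ hi lo N.+1) ?le_lohi ?le_hiN //.
rewrite /= addrCA lerDl.
by apply: addr_ge0; apply: sumr_ge0 => j _; apply: ihg_pmf_ge0.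
Qed.

Lemma ihg_pmf_mlr M K j n : (M <= K)%N -> (j <= n)%N ->
  pmf M r j * pmf K r n <= pmf M r n * pmf K r j.
Proof.
move=> le_MK le_jn.
have regroup (a b c a' b' c' : R) : a * b / c * (a' * b' / c') = a * a' / (c * c') * (b * b').
  by rewrite invfM; ring.
rewrite /pmf /ihg_pmf !natrM !regroup [('C(n.-1, r.-1))%:R * _]mulrC.
rewrite ler_wpM2l ?divr_ge0 ?mulr_ge0 ?ler0n // -!natrM ler_nat.
by apply: leq_bin_cross; rewrite ?leq_sub2l ?leq_sub2r.
Qed.

Lemma sum_ihg_pmf_le_ratio M K n lo hi :
  (r <= K <= N)%N -> (r <= lo)%N -> (hi <= N.+1)%N -> 0 < pmf K r n ->
  (forall j, (lo <= j < hi)%N -> pmf M r j * pmf K r n <= pmf M r n * pmf K r j) ->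
  \sum_(lo <= j < hi) pmf M r j <= pmf M r n / pmf K r n.
Proof.
move=> le_rKN le_rlo le_hiN pKn_gt0 mlr.
apply: (@le_trans _ _ (\sum_(lo <= j < hi) pmf M r n / pmf K r n * pmf K r j)).
  rewrite big_nat_cond [X in _ <= X]big_nat_cond; apply: ler_sum => j /andP[jP _].
  by rewrite mulrAC ler_pdivlMr // mlr.
rewrite -mulr_sumr ler_piMr ?sum_ihg_pmf_le1 //.
by rewrite divr_ge0 ?ihg_pmf_ge0 // ltW.
Qed.

Lemma ihg_cdf_le_ratio M K n : (M <= K)%N -> (r <= K <= N)%N -> (n <= N)%N ->
  0 < pmf K r n -> ihg_cdf_le R N M r n <= pmf M r n / pmf K r n.
Proof.
move=> le_MK le_rKN le_nN pKn_gt0.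
apply: sum_ihg_pmf_le_ratio => // j /andP[_ le_jn]; exact: ihg_pmf_mlr.
Qed.

Lemma ihg_cdf_ge_ratio M K n : (K <= M)%N -> (r <= K <= N)%N -> (r <= n)%N ->
  0 < pmf K r n -> ihg_cdf_ge R N M r n <= pmf M r n / pmf K r n.
Proof.
move=> le_KM le_rKN le_rn pKn_gt0.
apply: sum_ihg_pmf_le_ratio => // j /andP[le_nj _].
by rewrite mulrC [X in _ <= X]mulrC ihg_pmf_mlr.
Qed.

End InverseHypergeometric.

Lemma ihg_bound1_ratio (R : realFieldType) N M r n K :
  (M <= N)%N -> (K <= N)%N -> 0 < ihg_pmf R N K r n ->
  ihg_bound1 R N M r n K = ihg_pmf R N M r n / ihg_pmf R N K r n.
Proof.
move=> le_MN le_KN /lt0r_neq0; rewrite /ihg_bound1 /ihg_pmf !natrM !mulf_eq0 negb_or => /andP[].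
rewrite negb_or => /andP[cn0 cK0] _.
by field; rewrite cn0 cK0 !pnatr_eq0 -!lt0n !bin_gt0 le_MN le_KN.
Qed.

Lemma ihg_bound1_eq_bound2 (R : realFieldType) N M r n K :
  (r <= M <= N)%N -> (r <= K <= N)%N -> (r <= n <= N)%N ->
  (M - r <= N - n)%N -> (K - r <= N - n)%N ->
  ihg_bound1 R N M r n K = ihg_bound2 R N M r n K.
Proof.
move=> le_rMN le_rKN le_rnN le_Mr_Nn le_Kr_Nn.
have nz2 : ('C(K, r) * 'C(N - K, n - r))%:R != 0 :> R.
  by rewrite pnatr_eq0 -lt0n muln_gt0 !bin_gt0; lia.
have nz1 : ('C(N, M) * 'C(N - n, K - r))%:R != 0 :> R.
  by rewrite pnatr_eq0 -lt0n muln_gt0 !bin_gt0; lia.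
rewrite /ihg_bound1 /ihg_bound2; apply/eqP; rewrite eqr_div // -!natrM eqr_nat.
apply/eqP; transitivity ('C(N, K) * 'C(K, r) * 'C(N - K, n - r) * 'C(N - n, M - r))%N;
  first by ring.
transitivity ('C(N, M) * 'C(M, r) * 'C(N - M, n - r) * 'C(N - n, K - r))%N; last by ring.
by rewrite (mul_bin_sub_sym le_rKN le_rnN) (mul_bin_sub_sym le_rMN le_rnN); ring.
Qed.

Theorem corollary6 (R : realFieldType) (N M r : nat) (Mhat : nat -> nat) :
  (0 < r)%N -> (r <= M)%N -> (M <= N)%N ->
  (forall n, ihg_support R N M r n -> (r <= Mhat n <= N)%N) ->
  forall n, ihg_support R N M r n ->
    ((M <= Mhat n)%N -> 'C(N - n, Mhat n - r) != 0%N ->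
       ihg_cdf_le R N M r n <= ihg_bound1 R N M r n (Mhat n) /\
       ihg_bound1 R N M r n (Mhat n) = ihg_bound2 R N M r n (Mhat n)) /\
    ((Mhat n <= M)%N ->
       ihg_cdf_ge R N M r n <= ihg_bound1 R N M r n (Mhat n) /\
       ihg_bound1 R N M r n (Mhat n) = ihg_bound2 R N M r n (Mhat n)).
Proof.
move=> r_gt0 le_rM le_MN hMhat n supp_n.
have le_rKN := hMhat n supp_n; set K := Mhat n in le_rKN *.
have /andP[_ le_KN] := le_rKN.
move: supp_n => /and3P[le_rn le_nN]; rewrite ihg_pmf_gt0 // => le_Mr_Nn.
have bounds_eq : (K - r <= N - n)%N -> ihg_bound1 R N M r n K = ihg_bound2 R N M r n K.
  by move=> le_Kr_Nn; rewrite ihg_bound1_eq_bound2 ?le_rM ?le_MN ?le_rn ?le_nN.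
split=> [le_MK | le_KM].
  rewrite -lt0n bin_gt0 => le_Kr_Nn; split; last exact: bounds_eq.
  by rewrite ihg_bound1_ratio ?ihg_cdf_le_ratio ?ihg_pmf_gt0.
have le_Kr_Nn : (K - r <= N - n)%N := leq_trans (leq_sub2r r le_KM) le_Mr_Nn.
split; last exact: bounds_eq.
by rewrite ihg_bound1_ratio ?ihg_cdf_ge_ratio ?ihg_pmf_gt0.
Qed.
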